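(* Let $\tilde p\in\mathbb{R}^{dn}$ be a target formation (i.e. $\|\tilde p_i-\tilde p_j\|=d_{ij}$ for all $(i,j)\in\mathcal{E}$ and $\tilde p_j-\tilde p_i=\hat p_j-\hat p_i$ for all $(i,j)\in\mathcal{E}_o$) which is infinitesimally rigid, and suppose the orientation edges are selected as follows: all edges of $\mathcal{E}_o$ are incident to a common agent $i_0$; if $d=2$, $\mathcal{E}_o\neq\emptyset$; if $d=3$, $\mathcal{E}_o$ contains two edges $(i_0,j),(i_0,j')$ whose desired vectors $\hat p_j-\hat p_{i_0}$ and $\hat p_{j'}-\hat p_{i_0}$ are linearly independent. Then the matrix \[ \mathcal{F}:=R(\tilde p)^TR(\tilde p)+L_o\otimes I_d \] is positive semidefinite and has exactly $d$ zero eigenvalues; moreover $\mathrm{null}(\mathcal{F})=\mathrm{null}(H\otimes I_d)=\mathrm{span}(\mathbf{1}_n\otimes I_d)$ (the column span of $\mathbf{1}_n\otimes I_d$).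
   Context: Let $d\in\{2,3\}$, $n\ge2$. $\mathcal{G}=(\mathcal{V},\mathcal{E})$ is an undirected graph on $\{1,\dots,n\}$ with $m$ edges, each edge $k$ given an arbitrary orientation (head $j$, tail $i$); $H\in\mathbb{R}^{m\times n}$ is the incidence matrix ($h_{ki}=1$ if edge $k$ sinks at $i$, $-1$ if it leaves $i$, $0$ otherwise). For $p\in\mathbb{R}^{dn}$, $z=(H\otimes I_d)p$ with $z_k=p_j-p_i$, $Z(z)=\mathrm{diag}(z_1,\dots,z_m)\in\mathbb{R}^{dm\times m}$ block diagonal, and the rigidity matrix is $R(p)=Z(z)^T(H\otimes I_d)$. The framework $(\mathcal{G},p)$ is infinitesimally rigid iff $\mathrm{rank}\,R(p)=dn-d(d+1)/2$. Edges carry desired distances $d_{ij}>0$. $\mathcal{E}_o\subseteq\mathcal{E}$ is a set of orientation edges, $L_o$ the Laplacian of the undirected graph $(\mathcal{V},\mathcal{E}_o)$, and for each $(i,j)\in\mathcal{E}_o$ a desired relative vector $\hat p_j-\hat p_i\in\mathbb{R}^d$ with $\|\hat p_j-\hat p_i\|=d_{ij}$ is prescribed. $\mathbf{1}_n$ is the all-ones vector. *)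

From HB Require Import structures.
From mathcomp Require Import all_boot all_order all_algebra.
From mathcomp Require Export mxtens.
Set Implicit Arguments. Unset Strict Implicit. Unset Printing Implicit Defensive.
Import Order.TTheory GRing.Theory Num.Theory.
Local Open Scope ring_scope.

Section Formation.
Variable R : realFieldType.

Definition simple_graph (m n : nat) (tl hd : 'I_m -> 'I_n) : Prop :=
  (forall k, tl k != hd k) /\
  (forall k k', ((tl k == tl k') && (hd k == hd k')) ||
                ((tl k == hd k') && (hd k == tl k')) -> k = k').

Definition incidence (m n : nat) (tl hd : 'I_m -> 'I_n) : 'M[R]_(m, n) :=
  \matrix_(k, i) (if i == hd k then 1 else if i == tl k then -1 else 0).

(* p_i, the i-th block of p in R^{dn} (index (i,a) |-> i*d + a). *)
Definition pos (n d : nat) (p : 'cV[R]_(n * d)) (i : 'I_n) : 'cV[R]_d :=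
  \col_a p (mxtens_index (i, a)) 0.

(* Z(z) = diag(z_1,...,z_m), block diagonal dm x m. *)
Definition Zmat (m d : nat) (z : 'cV[R]_(m * d)) : 'M[R]_(m * d, m) :=
  \matrix_(r, l) (if (mxtens_unindex r).1 == l then z r 0 else 0).

Definition rigidity (m n d : nat) (H : 'M[R]_(m, n)) (p : 'cV[R]_(n * d))
  : 'M[R]_(m, n * d) :=
  (Zmat ((H *t (1%:M : 'M[R]_d)) *m p))^T *m (H *t (1%:M : 'M[R]_d)).

Definition inf_rigid (m n d : nat) (H : 'M[R]_(m, n)) (p : 'cV[R]_(n * d)) :=
  \rank (rigidity H p) = (n * d - d * (d + 1) %/ 2)%N.

Definition laplacian (m n : nat) (tl hd : 'I_m -> 'I_n) (O : {set 'I_m})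
  : 'M[R]_n :=
  \matrix_(i, j)
    (if i == j then (#|[set k in O | (tl k == i) || (hd k == i)]|)%:R
     else - (#|[set k in O | ((tl k == i) && (hd k == j))
                          || ((tl k == j) && (hd k == i))]|)%:R).

Definition sqnorm (d : nat) (v : 'cV[R]_d) : R := \sum_a v a 0 ^+ 2.

Definition psd (N : nat) (F : 'M[R]_N) : Prop :=
  forall x : 'cV[R]_N, 0 <= (x^T *m F *m x) 0 0.

End Formation.

From HB Require Import structures.
From mathcomp Require Import all_boot all_order all_algebra.
From mathcomp Require Import mxtens.
From mathcomp Require Import zify lra.
Set Implicit Arguments. Unset Strict Implicit. Unset Printing Implicit Defensive.
Import Order.TTheory GRing.Theory Num.Theory.
Local Open Scope ring_scope.

(* F is the sum of the Gram matrices R^T R and (H_o (x) I_d)^T (H_o (x) I_d), where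
   L_o = H_o^T H_o for the incidence matrix H_o of the orientation edges.  Hence F
   is positive semidefinite and F x = 0 iff R x = 0 and x agrees at the two ends of
   every orientation edge.  By infinitesimal rigidity the kernel of R has dimension
   d(d+1)/2, so it consists exactly of the trivial motions x_i = t + A p_i with A
   skew-symmetric (one generator in the plane, three in space).  Such a motion
   agrees across an orientation edge iff A kills its direction, and the selected
   orientation edges (one nonzero direction in the plane, two independent ones in
   space) force A = 0.  So ker F is the space of translations 1_n (x) t, which is
   ker (H (x) I_d), and, F being symmetric, 0 is a root of its characteristic
   polynomial of multiplicity dim ker F = d. *)

Lemma char_poly_similar (K : comUnitRingType) n (F P B : 'M[K]_n) :
  P \in unitmx -> P *m F = B *m P -> char_poly F = char_poly B.
Proof.
move=> uP PF; have eF : F = invmx P *m B *m P by rewrite -mulmxA -PF mulKmx.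
rewrite /char_poly; have -> : char_poly_mx F
    = map_mx (@polyC K) (invmx P) *m char_poly_mx B *m map_mx polyC P.
  rewrite /char_poly_mx mulmxBr mulmxBl -!map_mxM -eF; congr (_ - _).
  by rewrite mul_mx_scalar -scalemxAl -map_mxM mulVmx // map_mx1 scalemx1.
rewrite !det_mulmx mulrC mulrA -det_mulmx -map_mxM.
by rewrite mulmxV // map_mx1 det1 mul1r.
Qed.

Lemma mup0_char_poly_block (K : fieldType) k r (C : 'M[K]_r) :
  C \in unitmx -> mup 0 (char_poly (block_mx 0 0 0 C : 'M_(k + r))) = k.
Proof.
move=> uC; rewrite /char_poly char_block_diag_mx det_ublock mupMl.
  rewrite /char_poly_mx map_mx0 subr0 det_scalar.
  by rewrite -[X in X ^+ _]subr0 -polyC0 mup_XsubCX eqxx.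
rewrite -/(char_poly C) /root horner_coef0 char_poly_det mulf_eq0 negb_or.
by rewrite expf_eq0 oppr_eq0 oner_eq0 andbF -unitfE -unitmxE.
Qed.

Section Kernels.
Variable K : fieldType.

Lemma row_free_ker_span N D p (A : 'M[K]_(p, N)) (M : 'M[K]_(D, N)) :
  \rank A = (N - D)%N -> A *m M^T = 0 -> row_free M ->
  forall x : 'cV_N, A *m x = 0 -> exists u, x^T = u *m M.
Proof.
move=> rkA AM0 /eqP rkM x Ax0.
have sMK : (M <= kermx A^T)%MS.
  by apply/sub_kermxP; rewrite -[M]trmxK -trmx_mul AM0 trmx0.
have /eqmxP eMK : (M == kermx A^T)%MS.
  rewrite -(mxrank_leqif_eq sMK) mxrank_ker mxrank_tr rkA rkM subKn //.
  by rewrite -rkM rank_leq_col.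
by apply/submxP; rewrite eMK; apply/sub_kermxP; rewrite -trmx_mul Ax0 trmx0.
Qed.

Lemma kermx_eqmx_span N p (F : 'M[K]_N) (C : 'M[K]_(N, p)) :
  F^T = F -> (forall x : 'cV_N, F *m x = 0 <-> exists y, x = C *m y) ->
  (kermx F == C^T)%MS.
Proof.
move=> symF kerF; apply/andP; split.
  apply/row_subP => r.
  have : F *m (row r (kermx F))^T = 0.
    by rewrite -{1}symF -trmx_mul -row_mul mulmx_ker row0 trmx0.
  by case/kerF => y ey; rewrite -[row r _]trmxK ey trmx_mul submxMl.
have FC0 : F *m C = 0.
  apply/matrixP => i j; rewrite [RHS]mxE.
  have /colP/(_ i) := (kerF (C *m delta_mx j 0)).2 (ex_intro _ _ erefl).
  by rewrite mulmxA -colE !mxE.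
by apply/sub_kermxP; rewrite -{1}symF -trmx_mul FC0 trmx0.
Qed.
End Kernels.

Lemma free2_lincomb_eq0 (K : fieldType) (vT : vectType K) (u v : vT) :
  free [:: u; v] -> forall a b, a *: u + b *: v = 0 -> a = 0 /\ b = 0.
Proof.
move=> /(@freeP _ _ _ (in_tuple [:: u; v])) indep a b comb0.
have := indep (fun l : 'I_2 => if l == ord0 then a else b).
rewrite !big_ord_recl big_ord0 /= addr0 => /(_ comb0) coef0.
by split; [exact: (coef0 ord0) | exact: (coef0 (lift ord0 ord0))].
Qed.

Section RealMatrices.
Variable R : realFieldType.

Lemma sqnormE d (v : 'cV[R]_d) : sqnorm v = (v^T *m v) 0 0.
Proof. by rewrite mxE; apply: eq_bigr => a _; rewrite mxE expr2. Qed.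

Lemma sqnorm_ge0 d (v : 'cV[R]_d) : 0 <= sqnorm v.
Proof. by apply: sumr_ge0 => a _; rewrite sqr_ge0. Qed.

Lemma sqnorm_eq0 d (v : 'cV[R]_d) : (sqnorm v == 0) = (v == 0).
Proof.
apply/idP/eqP => [|->]; last by rewrite /sqnorm big1 // => a _; rewrite mxE expr0n.
rewrite psumr_eq0 => [/allP v0|a _]; last by rewrite sqr_ge0.
apply/colP => a; rewrite mxE.
by have := v0 a (mem_index_enum a); rewrite sqrf_eq0 => /eqP.
Qed.

Lemma gram_quadE N p (A : 'M[R]_(p, N)) (x : 'cV_N) :
  (x^T *m (A^T *m A) *m x) 0 0 = sqnorm (A *m x).
Proof. by rewrite sqnormE trmx_mul !mulmxA. Qed.

Lemma skew_quad_eq0 d (A : 'M[R]_d) (w : 'cV_d) :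
  A^T = - A -> (w^T *m A *m w) 0 0 = 0.
Proof.
move=> skewA; have : (w^T *m A *m w) 0 0 = - (w^T *m A *m w) 0 0.
  transitivity ((w^T *m A *m w)^T 0 0); first by rewrite [RHS]mxE.
  by rewrite !trmx_mul trmxK skewA mulNmx mulmxN mulmxA mxE.
by move/eqP; rewrite -addr_eq0 -mulr2n mulrn_eq0 /= => /eqP.
Qed.

Lemma gram_eq0 p N (W : 'M[R]_(p, N)) : W *m W^T = 0 -> W = 0.
Proof.
move=> WW0; apply/row_matrixP => i; rewrite row0; apply: trmx_inj; rewrite trmx0.
apply/eqP; rewrite -sqnorm_eq0 sqnormE trmxK; apply/eqP.
transitivity ((W *m W^T) i i); last by rewrite WW0 mxE.
by rewrite !mxE; apply: eq_bigr => j _; rewrite !mxE.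
Qed.

Lemma sym_ker_im_eq0 N p (F : 'M[R]_N) (W : 'M[R]_(p, N)) :
  F^T = F -> W *m F = 0 -> (W <= F)%MS -> W = 0.
Proof.
move=> symF WF /submxP[Y eW]; apply: gram_eq0.
by rewrite {2}eW trmx_mul symF mulmxA WF mul0mx.
Qed.

Lemma sym_block_similar k r (F : 'M[R]_(k + r)) :
  F^T = F -> \rank (kermx F) = k ->
  exists P (C : 'M_r),
    [/\ P \in unitmx, C \in unitmx & P *m F = block_mx 0 0 0 C *m P].
Proof.
move=> symF rkK.
have rkF : \rank F = r by move: rkK (rank_leq_col F); rewrite mxrank_ker; lia.
pose B1 : 'M_(k, k + r) := castmx (rkK, erefl) (row_base (kermx F)).
pose B2 : 'M_(r, k + r) := castmx (rkF, erefl) (row_base F).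
have eB1 : (B1 :=: kermx F)%MS := eqmx_trans (eqmx_cast _ _) (eq_row_base _).
have eB2 : (B2 :=: F)%MS := eqmx_trans (eqmx_cast _ _) (eq_row_base _).
have B1F : B1 *m F = 0 by apply/sub_kermxP; rewrite eB1.
have [C B2F] : exists C, B2 *m F = C *m B2 by apply/submxP; rewrite eB2 submxMl.
have B1B2 : (B1 :&: B2)%MS = 0.
  apply: (sym_ker_im_eq0 symF); last by rewrite -eB2 capmxSr.
  by apply/sub_kermxP; rewrite -eB1 capmxSl.
exists (col_mx B1 B2), C; split.
- rewrite -row_free_unit /row_free -addsmxE mxrank_disjoint_sum //.
  by rewrite eB1 eB2 rkK rkF.
- rewrite -row_free_unit; apply: inj_row_free => u uC0.
  have B2free : row_free B2 by rewrite /row_free eB2 rkF.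
  apply: (row_free_inj B2free); rewrite mul0mx.
  apply: (sym_ker_im_eq0 symF); last by rewrite -eB2 submxMl.
  by rewrite -mulmxA B2F mulmxA uC0 mul0mx.
- by rewrite mul_col_mx mul_block_col B1F B2F !mul0mx !add0r.
Qed.

Lemma mup0_char_poly_sym_block k r (F : 'M[R]_(k + r)) :
  F^T = F -> \rank (kermx F) = k -> mup 0 (char_poly F) = k.
Proof.
move=> symF rkK; have [P [C [uP uC PF]]] := sym_block_similar symF rkK.
by rewrite (char_poly_similar uP PF) mup0_char_poly_block.
Qed.

Lemma mup0_char_poly_sym N (F : 'M[R]_N) :
  F^T = F -> mup 0 (char_poly F) = \rank (kermx F).
Proof.
have := @mup0_char_poly_sym_block (\rank (kermx F)) (N - \rank (kermx F)).
by rewrite subnKC ?rank_leq_col // => mupF symF; apply: mupF.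
Qed.

End RealMatrices.

Section BlockVectors.
Variable R : realFieldType.

Lemma sum_mxtens_index p q (f : 'I_(p * q) -> R) :
  \sum_r f r = \sum_i \sum_j f (mxtens_index (i, j)).
Proof.
rewrite pair_big /= (reindex (@mxtens_index p q)) /=; last first.
  by exists (@mxtens_unindex p q) => x _; rewrite (mxtens_indexK, mxtens_unindexK).
by apply: eq_bigr => -[i j].
Qed.

Lemma pos_inj n d (x y : 'cV[R]_(n * d)) : (forall i, pos x i = pos y i) -> x = y.
Proof.
move=> eq_xy; apply/colP => r; case: (mxtens_indexP r) => i a.
by have /colP/(_ a) := eq_xy i; rewrite !mxE.
Qed.

Lemma pos_tens1_mul p n d (A : 'M[R]_(p, n)) (x : 'cV[R]_(n * d)) k :
  pos ((A *t 1%:M) *m x) k = \sum_i A k i *: pos x i.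
Proof.
apply/colP => a; rewrite !mxE summxE sum_mxtens_index; apply: eq_bigr => i _.
rewrite (bigD1 a) //= big1 => [|b /negbTE nba]; last first.
  by rewrite tensmxE mxE eq_sym nba mulr0 mul0r.
by rewrite tensmxE !mxE eqxx mulr1 addr0.
Qed.

Lemma pos0 n d i : pos (0 : 'cV[R]_(n * d)) i = 0.
Proof. by apply/colP => a; rewrite !mxE. Qed.

Lemma pos_const_tens1_mul n d (y : 'cV[R]_(1 * d)) i :
  pos ((const_mx 1 : 'cV[R]_n) *t 1%:M *m y) i = pos y ord0.
Proof. by rewrite pos_tens1_mul big_ord1 mxE scale1r. Qed.

Lemma tr_Zmat_mulE m d (z y : 'cV[R]_(m * d)) e :
  ((Zmat z)^T *m y) e 0 = ((pos z e)^T *m pos y e) 0 0.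
Proof.
rewrite mxE sum_mxtens_index (bigD1 e) //= [X in _ + X]big1 ?addr0 => [|e' ne'].
  by rewrite mxE; apply: eq_bigr => a _; rewrite !mxE mxtens_indexK eqxx.
by apply: big1 => a _; rewrite !mxE mxtens_indexK /= (negbTE ne') mul0r.
Qed.

Variables (n m : nat) (tl hd : 'I_m -> 'I_n).
Hypothesis tl_neq_hd : forall e, tl e != hd e.

Lemma pos_incidence_mul d (x : 'cV[R]_(n * d)) e :
  pos ((incidence R tl hd *t 1%:M) *m x) e = pos x (hd e) - pos x (tl e).
Proof.
rewrite pos_tens1_mul (bigD1 (hd e)) //= (bigD1 (tl e)) ?tl_neq_hd //=.
rewrite big1 => [|i /andP[/negbTE nih /negbTE nit]]; last by rewrite mxE nih nit scale0r.
by rewrite !mxE eqxx (negbTE (tl_neq_hd e)) eqxx addr0 scale1r scaleN1r.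
Qed.

Lemma rigidity_mulE d (p x : 'cV[R]_(n * d)) e :
  (rigidity (incidence R tl hd) p *m x) e 0
  = ((pos p (hd e) - pos p (tl e))^T *m (pos x (hd e) - pos x (tl e))) 0 0.
Proof. by rewrite -mulmxA tr_Zmat_mulE !pos_incidence_mul. Qed.

End BlockVectors.

Section TrivialMotions.
Variables (R : realFieldType) (n m d k : nat) (tl hd : 'I_m -> 'I_n).
Variables (O : {set 'I_m}) (p : 'cV[R]_(n * d)) (As : 'I_k -> 'M[R]_d).
Hypothesis tl_neq_hd : forall e, tl e != hd e.
Hypothesis As_skew : forall l, (As l)^T = - As l.

Local Notation Rp := (rigidity (incidence R tl hd) p).

Definition infrot (c : 'rV[R]_k) : 'M[R]_d := \sum_l c 0 l *: As l.

Definition motion_mx : 'M[R]_(d + k, n * d) :=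
  col_mx (\matrix_(b, r) ((mxtens_unindex r).2 == b)%:R)
         (\matrix_(l, r) (As l *m pos p (mxtens_unindex r).1) (mxtens_unindex r).2 0).

Lemma pos_motion (u : 'rV[R]_(d + k)) i :
  pos (u *m motion_mx)^T i = (lsubmx u)^T + infrot (rsubmx u) *m pos p i.
Proof.
apply/colP => a; rewrite /infrot mulmx_suml !mxE summxE big_split_ord /=.
congr (_ + _).
  rewrite (bigD1 a) //= big1 => [|b nba]; last first.
    by rewrite col_mxEu !mxE mxtens_indexK /= eq_sym (negbTE nba) mulr0.
  by rewrite col_mxEu !mxE mxtens_indexK eqxx mulr1 addr0.
by apply: eq_bigr => l _; rewrite col_mxEd -scalemxAl !mxE mxtens_indexK.
Qed.

Lemma pos_motion_sub (u : 'rV[R]_(d + k)) i j :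
  pos (u *m motion_mx)^T i - pos (u *m motion_mx)^T j
  = infrot (rsubmx u) *m (pos p i - pos p j).
Proof. by rewrite !pos_motion mulmxBr opprD addrACA subrr add0r. Qed.

Lemma infrot0 : infrot 0 = 0.
Proof. by rewrite /infrot big1 // => l _; rewrite mxE scale0r. Qed.

Lemma infrot_skew c : (infrot c)^T = - infrot c.
Proof.
apply/matrixP => i j; rewrite /infrot !mxE !summxE -sumrN.
apply: eq_bigr => l _; have /matrixP/(_ j i) := As_skew l.
by rewrite !mxE => ->; rewrite mulrN opprK.
Qed.

Lemma rigidity_motion : Rp *m motion_mx^T = 0.
Proof.
apply/matrixP => e r; rewrite [RHS]mxE.
transitivity ((Rp *m ((delta_mx 0 r : 'rV_(d + k)) *m motion_mx)^T) e 0).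
  by rewrite -rowE !mxE; apply: eq_bigr => c _; rewrite !mxE.
by rewrite rigidity_mulE // pos_motion_sub mulmxA skew_quad_eq0 // infrot_skew.
Qed.

Hypothesis infrot_fix_orient : forall c,
  (forall e, e \in O -> infrot c *m (pos p (hd e) - pos p (tl e)) = 0) -> c = 0.
Hypothesis n_gt0 : (0 < n)%N.
Hypothesis rank_rigidity : \rank Rp = (n * d - (d + k))%N.

Lemma motion_mx_free : row_free motion_mx.
Proof.
apply: inj_row_free => u uM0.
have pos0 i : pos (u *m motion_mx)^T i = 0.
  by rewrite uM0 trmx0; apply/colP => a; rewrite !mxE.
have c0 : rsubmx u = 0.
  by apply: infrot_fix_orient => e _; rewrite -pos_motion_sub !pos0 subrr.
have t0 : lsubmx u = 0.
  apply: trmx_inj; have := pos_motion u (Ordinal n_gt0).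
  by rewrite pos0 c0 infrot0 mul0mx addr0 trmx0.
by rewrite -[u]hsubmxK c0 t0 row_mx0.
Qed.

Lemma rigidity_orient_const x :
  Rp *m x = 0 -> (forall e, e \in O -> pos x (hd e) = pos x (tl e)) ->
  forall i j, pos x i = pos x j.
Proof.
move=> Rx0.
have [u xu] := row_free_ker_span rank_rigidity rigidity_motion motion_mx_free Rx0.
have {xu} -> : x = (u *m motion_mx)^T by rewrite -xu trmxK.
move=> xO.
have c0 : rsubmx u = 0.
  by apply: infrot_fix_orient => e eO; rewrite -pos_motion_sub xO // subrr.
by move=> i j; apply/eqP; rewrite -subr_eq0 pos_motion_sub c0 infrot0 mul0mx.
Qed.

End TrivialMotions.

Section OrientationGram.
Variables (R : realFieldType) (n m d : nat) (tl hd : 'I_m -> 'I_n).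
Variables (O : {set 'I_m}) (p : 'cV[R]_(n * d)).
Hypothesis tl_neq_hd : forall e, tl e != hd e.

Local Notation H := (incidence R tl hd).

Lemma incidence_mulE e i j :
  H e i * H e j =
  if i == j then ((tl e == i) || (hd e == i))%:R
  else - (((tl e == i) && (hd e == j)) || ((tl e == j) && (hd e == i)))%:R.
Proof.
have endpoints u : ~~ ((u == hd e) && (u == tl e)).
  by apply: contra (tl_neq_hd e) => /andP[/eqP <- /eqP <-].
rewrite !mxE ![tl e == _]eq_sym ![hd e == _]eq_sym.
case: (eqVneq i j) => [<-|nij].
  by move: (endpoints i); case: (i == hd e); case: (i == tl e) => //= _;
    rewrite ?mulr1 ?mulN1r ?opprK ?mul0r.
have distinct w : ~~ ((i == w) && (j == w)).
  by apply: contra nij => /andP[/eqP -> /eqP ->].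
move: (endpoints i) (endpoints j) (distinct (hd e)) (distinct (tl e)).
by case: (i == hd e); case: (i == tl e); case: (j == hd e); case: (j == tl e);
  rewrite //= => *; rewrite ?mulr1 ?mul1r ?mulr0 ?mul0r ?mulrN1 ?mulN1r ?opprK ?oppr0.
Qed.

Definition orient_incidence : 'M[R]_(m, n) :=
  \matrix_(e, i) (if e \in O then H e i else 0).

Lemma laplacian_gram :
  laplacian R tl hd O = orient_incidence^T *m orient_incidence.
Proof.
have cardE (P : pred 'I_m) :
    (#|[set e in O | P e]|)%:R = \sum_(e in O) (P e)%:R :> R.
  rewrite -sum1_card natr_sum big_mkcond [RHS]big_mkcond.
  by apply: eq_bigr => e _; rewrite inE; case: (e \in O); case: (P e).
apply/matrixP => i j; rewrite [RHS]mxE.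
transitivity (\sum_(e in O) H e i * H e j); last first.
  rewrite big_mkcond; apply: eq_bigr => e _.
  by rewrite !mxE; case: (e \in O); rewrite ?mul0r.
under eq_bigr do rewrite incidence_mulE.
by rewrite mxE; case: eqP => _; rewrite cardE // -sumrN.
Qed.

Implicit Types x : 'cV[R]_(n * d).

Local Notation T := (H *t (1%:M : 'M[R]_d)).
Local Notation Rp := (rigidity H p).
Local Notation G := (orient_incidence *t (1%:M : 'M[R]_d)).
Local Notation F := (Rp^T *m Rp + laplacian R tl hd O *t (1%:M : 'M[R]_d)).
Local Notation one := ((const_mx 1 : 'cV[R]_n) *t (1%:M : 'M[R]_d)).

Lemma orient_gramE : F = Rp^T *m Rp + G^T *m G.
Proof. by rewrite laplacian_gram trmx_tens trmx1 tensmx_mul mulmx1. Qed.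

Lemma orient_gram_sym : F^T = F.
Proof. by rewrite orient_gramE linearD /= !trmx_mul !trmxK. Qed.

Lemma orient_gram_quad x :
  (x^T *m F *m x) 0 0 = sqnorm (Rp *m x) + sqnorm (G *m x).
Proof. by rewrite orient_gramE mulmxDr mulmxDl mxE !gram_quadE. Qed.

Lemma orient_gram_psd : psd F.
Proof. by move=> x; rewrite orient_gram_quad addr_ge0 ?sqnorm_ge0. Qed.

Lemma pos_orient_incidence_mul x e :
  pos (G *m x) e = if e \in O then pos x (hd e) - pos x (tl e) else 0.
Proof.
rewrite pos_tens1_mul; case: ifP => eO; last first.
  by apply: big1 => i _; rewrite mxE eO scale0r.
by rewrite -pos_incidence_mul // pos_tens1_mul; apply: eq_bigr => i _; rewrite mxE eO.
Qed.

Lemma orient_incidence_mul_eq0 x :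
  G *m x = 0 <-> forall e, e \in O -> pos x (hd e) = pos x (tl e).
Proof.
split=> [Gx0 e eO | xO].
  apply/eqP; rewrite -subr_eq0.
  by have := pos_orient_incidence_mul x e; rewrite Gx0 pos0 eO => <-.
apply: pos_inj => e; rewrite pos_orient_incidence_mul pos0.
by case: ifP => // eO; rewrite xO // subrr.
Qed.

Lemma orient_gram_mul_eq0 x :
  F *m x = 0 <-> Rp *m x = 0 /\ forall e, e \in O -> pos x (hd e) = pos x (tl e).
Proof.
rewrite -orient_incidence_mul_eq0; split=> [Fx0 | [Rx0 Gx0]]; last first.
  by rewrite orient_gramE mulmxDl -mulmxA Rx0 -mulmxA Gx0 !mulmx0 addr0.
have : sqnorm (Rp *m x) + sqnorm (G *m x) = 0.
  by rewrite -orient_gram_quad -mulmxA Fx0 mulmx0 mxE.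
by move/eqP; rewrite paddr_eq0 ?sqnorm_ge0 // !sqnorm_eq0 => /andP[/eqP -> /eqP].
Qed.

Lemma tens_incidence_mul_eq0 x :
  T *m x = 0 <-> forall e, pos x (hd e) = pos x (tl e).
Proof.
split=> [Tx0 e | xE].
  by apply/eqP; rewrite -subr_eq0 -pos_incidence_mul // Tx0 pos0.
by apply: pos_inj => e; rewrite pos_incidence_mul // xE subrr pos0.
Qed.

Lemma rigidity_mul_eq0 x : T *m x = 0 -> Rp *m x = 0.
Proof. by move=> Tx0; rewrite /rigidity -mulmxA Tx0 mulmx0. Qed.

Hypothesis n_gt0 : (0 < n)%N.

Lemma const_blocksP x :
  (forall i j, pos x i = pos x j) <-> exists y : 'cV_(1 * d), x = one *m y.
Proof.
split=> [xc | [y ->] i j]; last by rewrite !pos_const_tens1_mul.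
pose i0 := Ordinal n_gt0.
exists (\col_r pos x i0 (mxtens_unindex r).2 0).
apply: pos_inj => i; rewrite pos_const_tens1_mul (xc i i0).
by apply/colP => a; rewrite !mxE mxtens_indexK.
Qed.

Lemma const_tens1_rank : \rank one = d.
Proof.
rewrite -mxrank_tr -[RHS]mul1n; apply/eqP; apply: inj_row_free => u u1.
apply: trmx_inj; rewrite trmx0; apply: pos_inj => i.
have /(congr1 (fun x => pos x (Ordinal n_gt0))) : one *m u^T = 0.
  by rewrite -[one]trmxK -trmx_mul u1 trmx0.
by rewrite pos_const_tens1_mul !pos0 (ord1 i).
Qed.

Hypothesis rigidity_orient_const : forall x, Rp *m x = 0 ->
  (forall e, e \in O -> pos x (hd e) = pos x (tl e)) -> forall i j, pos x i = pos x j.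

Lemma tens_incidence_ker x : T *m x = 0 <-> exists y : 'cV_(1 * d), x = one *m y.
Proof.
rewrite -const_blocksP tens_incidence_mul_eq0; split=> [xE | xc e]; last exact: xc.
apply: rigidity_orient_const => [|e _]; last by rewrite xE.
by rewrite rigidity_mul_eq0 // tens_incidence_mul_eq0.
Qed.

Lemma orient_gram_ker x : F *m x = 0 <-> T *m x = 0.
Proof.
rewrite orient_gram_mul_eq0; split=> [[Rx0 xO] | Tx0].
  by apply/tens_incidence_ker/const_blocksP/rigidity_orient_const.
by split=> [|e _]; [exact: rigidity_mul_eq0 | exact: (tens_incidence_mul_eq0 x).1].
Qed.

Lemma orient_gram_mup0 : mup 0 (char_poly F) = d.
Proof.
have kerF x : F *m x = 0 <-> exists y, x = one *m y.
  by rewrite orient_gram_ker tens_incidence_ker.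
rewrite mup0_char_poly_sym ?orient_gram_sym //.
by rewrite (eqmxP (kermx_eqmx_span orient_gram_sym kerF)) mxrank_tr const_tens1_rank.
Qed.

End OrientationGram.

Section Rotations.
Variable R : realFieldType.

Lemma parallel_free_eq0 d (c w1 w2 : 'cV[R]_d) : free [:: w1; w2] ->
  (forall i j, c i 0 * w1 j 0 = c j 0 * w1 i 0) ->
  (forall i j, c i 0 * w2 j 0 = c j 0 * w2 i 0) -> c = 0.
Proof.
move=> indep par1 par2; apply/colP => j; rewrite mxE.
have scale_par (w : 'cV_d) : (forall i j, c i 0 * w j 0 = c j 0 * w i 0) ->
    c j 0 *: w = w j 0 *: c.
  by move=> par; apply/colP => i; rewrite !mxE -par mulrC.
have comb0 : (c j 0 * w2 j 0) *: w1 + (- (c j 0 * w1 j 0)) *: w2 = 0.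
  rewrite scaleNr [c j 0 * w2 j 0]mulrC [c j 0 * w1 j 0]mulrC -!scalerA.
  by rewrite !scale_par // !scalerA mulrC subrr.
have [_ /eqP] := free2_lincomb_eq0 indep comb0; rewrite oppr_eq0 => /eqP cw1.
have : c j 0 ^+ 2 *: w1 = 0.
  by rewrite expr2 -scalerA (scale_par w1) // scalerA cw1 scale0r.
move/eqP; rewrite scalemx_eq0 expf_eq0 /= => /orP[/eqP //|/eqP w10].
by move: (free_not0 indep (mem_head w1 [:: w2])); rewrite w10 eqxx.
Qed.

Definition rot2 : 'M[R]_2 :=
  \matrix_(i, j) match val i, val j with 1, 0 => 1 | 0, 1 => -1 | _, _ => 0 end.

Lemma rot2_skew : rot2^T = - rot2.
Proof. by apply/matrixP => -[[|[|//]] ?] [[|[|//]] ?]; rewrite !mxE /= ?oppr0 ?opprK. Qed.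

Lemma infrot_rot2_fix (c : 'rV[R]_1) (w : 'cV[R]_2) :
  w != 0 -> infrot (fun=> rot2) c *m w = 0 -> c = 0.
Proof.
rewrite /infrot big_ord1 -scalemxAl => w_neq0 /eqP.
rewrite scalemx_eq0 => /orP[/eqP c0|/eqP/colP rw0].
  by apply/rowP => l; rewrite !ord1 c0 mxE.
have := rw0 ord0; have := rw0 (lift ord0 ord0).
rewrite !mxE !big_ord_recl !big_ord0 !mxE /= => rw1 rw0'.
case/eqP: w_neq0; apply/colP => a; rewrite mxE.
have [->|->] : a = ord0 \/ a = lift ord0 ord0.
  by case: a => [[|[|//]] ?]; [left|right]; apply: val_inj.
all: lra.
Qed.

(* [rot3 l] is the cross-product matrix of the l-th unit vector, so that
   [infrot rot3 c *m w] is the cross product of [c^T] and [w]. *)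
Definition rot3 (l : 'I_3) : 'M[R]_3 :=
  \matrix_(i, j) match val l, val i, val j with
    | 0, 1, 2 | 1, 2, 0 | 2, 0, 1 => -1
    | 0, 2, 1 | 1, 0, 2 | 2, 1, 0 => 1
    | _, _, _ => 0 end.

Lemma rot3_skew l : (rot3 l)^T = - rot3 l.
Proof.
apply/matrixP => i j; rewrite !mxE.
case: l i j => [[|[|[|//]]] ?] [[|[|[|//]]] ?] [[|[|[|//]]] ?];
  by rewrite /= ?oppr0 ?opprK.
Qed.

Lemma infrot_rot3_parallel (c : 'rV[R]_3) (w : 'cV[R]_3) :
  infrot rot3 c *m w = 0 -> forall i j, c^T i 0 * w j 0 = c^T j 0 * w i 0.
Proof.
move=> /colP rw0.
have := rw0 ord0; have := rw0 (lift ord0 ord0); have := rw0 (lift ord0 (lift ord0 ord0)).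
rewrite /infrot !mxE !big_ord_recl !big_ord0 !mxE /= => e2 e1 e0 i j.
have ord3 (a : 'I_3) : [\/ a = ord0, a = lift ord0 ord0 | a = lift ord0 (lift ord0 ord0)].
  case: a => [[|[|[|//]]] ?];
    [constructor 1|constructor 2|constructor 3]; exact: val_inj.
by rewrite !mxE; case: (ord3 i) => ->; case: (ord3 j) => ->; lra.
Qed.

Lemma infrot_rot3_fix (c : 'rV[R]_3) (w1 w2 : 'cV[R]_3) : free [:: w1; w2] ->
  infrot rot3 c *m w1 = 0 -> infrot rot3 c *m w2 = 0 -> c = 0.
Proof.
move=> indep /infrot_rot3_parallel par1 /infrot_rot3_parallel par2.
by apply: trmx_inj; rewrite trmx0; apply: parallel_free_eq0 indep par1 par2.
Qed.

End Rotations.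

Arguments rot2 {R}.
Arguments rot3 {R}.

Unset Implicit Arguments. Set Strict Implicit.

Theorem lemma5 (R : realFieldType) (d n m : nat)
  (hd2 : d = 2%N \/ d = 3%N) (hn : (2 <= n)%N)
  (tl hd : 'I_m -> 'I_n) (hG : simple_graph tl hd)
  (dist : 'I_m -> R) (hdist : forall k, 0 < dist k)
  (O : {set 'I_m}) (v : 'I_m -> 'cV[R]_d)
  (hv : forall k, k \in O -> sqnorm (v k) = dist k ^+ 2)
  (pt : 'cV[R]_(n * d))
  (hdistpt : forall k, sqnorm (pos pt (hd k) - pos pt (tl k)) = dist k ^+ 2)
  (hoript : forall k, k \in O -> pos pt (hd k) - pos pt (tl k) = v k)
  (hrig : inf_rigid (incidence R tl hd) pt)
  (hsel : exists i0 : 'I_n,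
     (forall k, k \in O -> (tl k == i0) || (hd k == i0)) /\
     (d = 3%N -> exists k k', [/\ k \in O, k' \in O &
        free [:: (if tl k == i0 then v k else - v k);
                 (if tl k' == i0 then v k' else - v k')]]))
  (hO2 : d = 2%N -> O != set0) :
  let H := incidence R tl hd in
  let F := (rigidity H pt)^T *m rigidity H pt
           + laplacian R tl hd O *t (1%:M : 'M[R]_d) in
  [/\ psd F,
      mup 0 (char_poly F) = d,
      (forall x : 'cV[R]_(n * d),
         F *m x = 0 <-> (H *t (1%:M : 'M[R]_d)) *m x = 0) &
      (forall x : 'cV[R]_(n * d),
         (H *t (1%:M : 'M[R]_d)) *m x = 0 <->
         exists y : 'cV[R]_(1 * d),
           x = ((const_mx 1 : 'cV[R]_n) *t (1%:M : 'M[R]_d)) *m y)].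
Proof.
move=> H F; have [tl_neq_hd _] := hG; have n_gt0 : (0 < n)%N by apply: ltnW.
have [i0 [_ hsel3]] := hsel.
have orient_const x : rigidity H pt *m x = 0 ->
    (forall e, e \in O -> pos x (hd e) = pos x (tl e)) -> forall i j, pos x i = pos x j.
  case: hd2 => d_eq; subst d.
  - have /set0Pn [e0 e0O] := hO2 erefl.
    have w0 : pos pt (hd e0) - pos pt (tl e0) != 0.
      by rewrite -sqnorm_eq0 hdistpt sqrf_eq0 gt_eqF.
    apply: (rigidity_orient_const (As := fun=> rot2) tl_neq_hd _ _ n_gt0 hrig).
    + by move=> _; apply: rot2_skew.
    + by move=> c /(_ e0 e0O); apply: infrot_rot2_fix.
  - have [k1 [k2 [k1O k2O indep]]] := hsel3 erefl.
    apply: (rigidity_orient_const (As := rot3) tl_neq_hd _ _ n_gt0 hrig).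
    + exact: rot3_skew.
    + move=> c fixO.
      have signed k : k \in O -> infrot rot3 c *m (if tl k == i0 then v k else - v k) = 0.
        move=> kO; rewrite -(hoript k kO) (fun_if (mulmx _)) mulmxN.
        by rewrite fixO // oppr0 if_same.
      exact: (infrot_rot3_fix indep (signed k1 k1O) (signed k2 k2O)).
split.
- exact: orient_gram_psd.
- exact: orient_gram_mup0 tl_neq_hd n_gt0 orient_const.
- exact: orient_gram_ker tl_neq_hd n_gt0 orient_const.
- exact: tens_incidence_ker tl_neq_hd n_gt0 orient_const.
Qed.
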